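(* Let $p(z)$ be any polynomial of degree $n\ge1$ with complex coefficients, and let $m=20n$. Then $$\sup_{|z|\le1}|p'(z)|\le 2n\sup_{k\in\{1,\dots,m\}}\left|p\!\left(e^{2ik\pi/m}\right)\right|.$$ *)

From HB Require Import structures.
From mathcomp Require Import all_boot all_order all_algebra.
From mathcomp Require Import complex.
From mathcomp Require Import reals trigo.
Set Implicit Arguments. Unset Strict Implicit. Unset Printing Implicit Defensive.
Import Order.TTheory GRing.Theory Num.Theory.
Local Open Scope ring_scope.
Local Open Scope complex_scope.

Definition unit_root_pt (R : realType) (m k : nat) : R[i] :=
  (cos ((2 * k%:R * pi) / m%:R) +i* sin ((2 * k%:R * pi) / m%:R))%C.

From HB Require Import structures.
From mathcomp Require Import all_boot all_order all_algebra.
From mathcomp Require Import complex.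
From mathcomp Require Import reals trigo.
From mathcomp Require Import zify ring lra.
Import Order.TTheory GRing.Theory Num.Theory.
Set Implicit Arguments. Unset Strict Implicit. Unset Printing Implicit Defensive.

(* Sampling a polynomial p of degree n at the m-th roots of unity, m >= 4n + 3,
   controls it on the unit circle up to a factor 2 (de la Vallee Poussin): the
   difference of the kernels |sum_(j < 3(n+1)) x^j|^2 and |sum_(j < n+1) x^j|^2
   reproduces polynomials of degree n under averaging over the roots, while the
   averages of the two nonnegative kernels only add up to twice the reproduction
   constant.  Bernstein's inequality |p'| <= n max_(|w| = 1) |p|, obtained from
   M. Riesz's interpolation formula at the n-th roots of -1, then bounds p' by
   2n max_k |p(e^(2ik pi/m))| on the circle, and the maximum principle carries
   the bound into the disk; the latter follows from Landau's trick: discrete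
   Fourier inversion bounds |q(z)| by N max_(|w| = 1) |q| whenever N > deg q,
   and this is applied to q = p'^K with N linear in K, letting K -> oo. *)

Lemma sum_ord_ltn n c : (\sum_(i < n) (i < c))%N = minn n c.
Proof.
elim: n => [|n IH]; first by rewrite big_ord0 min0n.
by rewrite big_ord_recr /= IH; case: (ltnP n c) => h /=; lia.
Qed.

Lemma sum_ord_leq n c : (\sum_(i < n) (c <= i))%N = n - c.
Proof.
elim: n => [|n IH]; first by rewrite big_ord0.
by rewrite big_ord_recr /= IH; case: (leqP c n) => h /=; lia.
Qed.

Lemma sum_ord_eq_addl n a t : (\sum_(l < n) (a + l == t))%N = (a <= t < a + n).
Proof.
elim: n => [|n IH]; first by rewrite big_ord0 addn0 ltnNge andbN.
rewrite big_ord_recr /= IH addnS ltnS [t <= _]leq_eqVlt [t == _]eq_sym.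
case: eqP => [<-|_] /=; first by rewrite ltnn andbF leq_addr.
by rewrite addn0.
Qed.

Lemma sum_ord_pairs_eq n j : j <= n ->
  (\sum_(i < n) \sum_(l < n) (j.+1 + i + l == n))%N = n - j.
Proof.
move=> le_jn; under eq_bigr => i _ do rewrite sum_ord_eq_addl.
rewrite (eq_bigr (fun i : 'I_n => nat_of_bool (i < n - j))) ?sum_ord_ltn; first lia.
by move=> i _; congr nat_of_bool; apply/andP/idP => [[]|]; lia.
Qed.

Lemma sum_ord_pairs_eq_double n j : j <= n ->
  (\sum_(i < n) \sum_(l < n) (j.+1 + i + l == n.*2))%N = j.
Proof.
move=> le_jn; under eq_bigr => i _ do rewrite sum_ord_eq_addl.
rewrite (eq_bigr (fun i : 'I_n => nat_of_bool (n - j <= i))) ?sum_ord_leq; first lia.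
by move=> i _; have := ltn_ord i => lt_in; congr nat_of_bool; apply/andP/idP => [[]|]; lia.
Qed.

Lemma dvdn_addn_subn N a b : a < N -> b < N -> (N %| a + (N - b)) = (a == b).
Proof.
move=> aN bN; case: (ltngtP a b) => [ab|ba|->]; last by rewrite subnKC ?dvdnn // ltnW.
- by rewrite gtnNdvd //; lia.
- have -> : a + (N - b) = N + (a - b) by lia.
  by rewrite dvdn_addr // gtnNdvd //; lia.
Qed.

Lemma dvdn_ltn_triple n e : 0 < e < n * 3 -> (n %| e) = (e == n) || (e == n.*2).
Proof.
case/andP=> e_gt0 lt_e3n; apply/idP/idP => [/dvdnP[q def_e]|/orP[]/eqP->].
- move: e_gt0 lt_e3n; rewrite def_e -muln2.
  by case: q {def_e} => [|[|[|q]]]; rewrite ?mul1n ?eqxx ?orbT //; lia.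
- exact: dvdnn.
- by rewrite -muln2 dvdn_mulr.
Qed.

Local Open Scope ring_scope.

Lemma sum_prim_root_exp (R : idomainType) N (z : R) s : N.-primitive_root z ->
  \sum_(k < N) (z ^+ s) ^+ k = if (N %| s)%N then N%:R else 0.
Proof.
move=> prim_z; rewrite (prim_order_dvd prim_z).
have [-> | zs_neq1] := eqVneq (z ^+ s) 1.
  by under eq_bigr do rewrite expr1n; rewrite sumr_const card_ord.
have /esym/eqP := subrX1 (z ^+ s) N.
rewrite exprAC (prim_expr_order prim_z) expr1n subrr mulf_eq0 subr_eq0.
by rewrite (negbTE zs_neq1) => /eqP.
Qed.

Lemma norm_prim_root (C : numDomainType) N (z : C) : N.-primitive_root z -> `|z| = 1.
Proof.
move=> prim_z; apply/eqP; rewrite -(pexpr_eq1 (prim_order_gt0 prim_z)) //.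
by rewrite -normrX (prim_expr_order prim_z) normr1.
Qed.

Section SamplingAtRootsOfUnity.
Variables (C : numDomainType) (N : nat) (z : C).
Hypothesis prim_z : N.-primitive_root z.

Lemma coef_prim_root_dft (f : {poly C}) j : (size f <= N)%N -> (j < N)%N ->
  N%:R * f`_j = \sum_(k < N) f.[z ^+ k] * (z ^+ (N - j)) ^+ k.
Proof.
move=> le_fN lt_jN.
under eq_bigr do rewrite (horner_coef_wide _ le_fN) mulr_suml.
rewrite exchange_big /=.
under eq_bigr => i _.
  under eq_bigr => k _ do rewrite -mulrA -!exprM mulnC -exprD -mulnDl exprM.
  rewrite -mulr_sumr sum_prim_root_exp // dvdn_addn_subn // fun_if mulr0.
  over.
by rewrite -big_mkcond (big_ord1_eq _ (fun i => f`_i * N%:R)) lt_jN mulrC.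
Qed.

Lemma norm_coef_le_samples (f : {poly C}) (B : C) j : (size f <= N)%N ->
  (forall k : 'I_N, `|f.[z ^+ k]| <= B) -> `|f`_j| <= B.
Proof.
move=> le_fN f_le_B.
have N_gt0 := prim_order_gt0 prim_z.
have B_ge0 : 0 <= B := le_trans (normr_ge0 _) (f_le_B (Ordinal N_gt0)).
have [lt_jN | le_Nj] := ltnP j N; last by rewrite nth_default ?normr0 // (leq_trans le_fN).
have Nr_gt0 : 0 < N%:R :> C by rewrite ltr0n.
rewrite -(ler_pM2l Nr_gt0).
have -> : N%:R * `|f`_j| = `|N%:R * f`_j| by rewrite normrM normr_nat.
have -> : N%:R * B = \sum_(k < N) B by rewrite sumr_const card_ord mulr_natl.
rewrite coef_prim_root_dft //; apply: le_trans (ler_norm_sum _ _ _) _; apply: ler_sum => k _.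
by rewrite normrM !normrX (norm_prim_root prim_z) !expr1n mulr1.
Qed.

Lemma norm_horner_le_samples (g : {poly C}) (B : C) x : (size g <= N)%N -> `|x| <= 1 ->
  (forall k : 'I_N, `|g.[z ^+ k]| <= B) -> `|g.[x]| <= N%:R * B.
Proof.
move=> le_gN x_le1 g_le_B; rewrite (horner_coef_wide _ le_gN).
have -> : N%:R * B = \sum_(i < N) B by rewrite sumr_const card_ord mulr_natl.
apply: le_trans (ler_norm_sum _ _ _) _; apply: ler_sum => i _.
rewrite normrM normrX -[X in _ <= X]mulr1.
apply: ler_pM; rewrite ?normr_ge0 ?exprn_ge0 ?exprn_ile1 //.
exact: norm_coef_le_samples.
Qed.

End SamplingAtRootsOfUnity.

Lemma expr_ge_bin2 (R : realDomainType) (e : R) K : 0 <= e ->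
  e ^+ 2 *+ 'C(K, 2) <= (1 + e) ^+ K.
Proof.
move=> e_ge0; rewrite addrC exprD1n.
have terms_ge0 i : 0 <= e ^+ i *+ 'C(K, i) by rewrite mulrn_wge0 ?exprn_ge0.
have [lt_K2 | le_2K] := ltnP K 2.
  by rewrite bin_small // mulr0n sumr_ge0.
by rewrite (bigD1 (Ordinal (le_2K : 2 < K.+1)%N)) //= lerDl sumr_ge0.
Qed.

Lemma ler_of_expr_le_linear (R : archiRealFieldType) (x y : R) d :
  0 <= x -> 0 <= y -> (forall K, x ^+ K <= ((K * d).+1)%:R * y ^+ K) -> x <= y.
Proof.
move=> x_ge0 y_ge0 x_le_y; rewrite leNgt; apply/negP => lt_yx.
have y_gt0 : 0 < y.
  rewrite lt_def y_ge0 andbT; apply: contraTneq lt_yx => y0.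
  by have := x_le_y 1%N; rewrite y0 expr1 mulr0 ltNge => ->.
set e := x / y - 1.
have e_gt0 : 0 < e by rewrite subr_gt0 ltr_pdivlMr // mul1r.
have growth K : e ^+ 2 *+ 'C(K, 2) <= ((K * d).+1)%:R.
  apply: le_trans (expr_ge_bin2 _ (ltW e_gt0)) _.
  by rewrite addrC subrK expr_div_n ler_pdivrMr ?exprn_gt0.
set k := Num.bound ((2 * d%:R + 2) / e ^+ 2).
have k_large : 2 * d%:R + 2 < k%:R * e ^+ 2.
  rewrite -ltr_pdivrMr ?exprn_gt0 // archi_boundP //.
  by rewrite divr_ge0 ?exprn_ge0 ?ltW //; have := ler0n R d; lra.
have bin2E : 'C(k.+1, 2)%:R * 2 = (k%:R + 1) * k%:R :> R.
  by rewrite -natrM mulnC -(mul_bin_diag k.+1 1) bin1 natrM -natr1.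
have := growth k.+1; rewrite -mulr_natr -natr1 natrM -natr1.
have := ler0n R k; have := ler0n R d; move: k_large bin2E.
set E := e ^+ 2; set c := 'C(_, _)%:R; set kr := k%:R; set dr := d%:R => *; nra.
Qed.

Lemma conjC_expr_unity (C : numClosedFieldType) (x : C) m b :
  `|x| = 1 -> x ^+ m = 1 -> (b <= m)%N -> x^* ^+ b = x ^+ (m - b).
Proof.
move=> x_norm1 xm1 le_bm; have xb_neq0 : x ^+ b != 0.
  by rewrite expf_neq0 // -normr_eq0 x_norm1 oner_eq0.
apply: (mulIf xb_neq0); rewrite -exprMn -exprD subnK // xm1.
by rewrite -normCKC x_norm1 !expr1n.
Qed.

(* [fejer N (e^(it))] is N times the Fejer kernel F_(N-1)(t). *)
Definition fejer (C : numClosedFieldType) N (x : C) := `|\sum_(j < N) x ^+ j| ^+ 2.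

Lemma fejer_ge0 (C : numClosedFieldType) N (x : C) : 0 <= fejer N x.
Proof. exact: exprn_ge0. Qed.

Lemma fejerE (C : numClosedFieldType) N (x : C) :
  fejer N x = \sum_(j < N) \sum_(l < N) x ^+ j * x^* ^+ l.
Proof.
rewrite /fejer normCK rmorph_sum mulr_suml; apply: eq_bigr => j _.
by rewrite mulr_sumr; apply: eq_bigr => l _; rewrite rmorphXn.
Qed.

Section FejerSampling.
Variables (C : numClosedFieldType) (m : nat) (om : C).
Hypothesis prim_om : m.-primitive_root om.

Let root_norm k : `|om ^+ k| = 1.
Proof. by rewrite normrX (norm_prim_root prim_om) expr1n. Qed.

Lemma sum_prim_root_orthogonal a b : (a < m)%N -> (b < m)%N ->
  \sum_(k < m) (om ^+ k) ^+ a * (om ^+ k)^* ^+ b = if a == b then m%:R else 0.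
Proof.
move=> lt_am lt_bm; rewrite -(dvdn_addn_subn lt_am lt_bm) -(sum_prim_root_exp _ prim_om).
apply: eq_bigr => k _.
have root_unity : (om ^+ k) ^+ m = 1 by rewrite exprAC (prim_expr_order prim_om) expr1n.
by rewrite (conjC_expr_unity (root_norm k) root_unity (ltnW lt_bm)) -exprD exprAC.
Qed.

Lemma sum_monomial_fejer a N w : (a + N <= m)%N -> `|w| = 1 ->
  \sum_(k < m) (om ^+ k) ^+ a * fejer N (w * (om ^+ k)^*) = m%:R * ((N - a)%:R * w ^+ a).
Proof.
move=> le_aNm w_norm1.
have expand k : (om ^+ k) ^+ a * fejer N (w * (om ^+ k)^*) = \sum_(j < N) \sum_(l < N)
    w ^+ j * w^* ^+ l * ((om ^+ k) ^+ (a + l) * (om ^+ k)^* ^+ j).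
  rewrite fejerE mulr_sumr; apply: eq_bigr => j _; rewrite mulr_sumr; apply: eq_bigr => l _.
  by rewrite rmorphM /= conjCK !exprMn exprD; ring.
under eq_bigr do rewrite expand.
rewrite exchange_big; under eq_bigr => j _ do rewrite exchange_big.
have lt_alm (l : 'I_N) : (a + l < m)%N by have := ltn_ord l; lia.
have lt_jm (j : 'I_N) : (j < m)%N by have := ltn_ord j; lia.
under eq_bigr => j _ do under eq_bigr => l _ do
  rewrite -mulr_sumr sum_prim_root_orthogonal ?lt_alm ?lt_jm //.
have pick (l : 'I_N) : \sum_(j < N) w ^+ j * w^* ^+ l * (if a + l == j then m%:R else 0)
    = (l < N - a)%:R * (m%:R * w ^+ a).
  rewrite (eq_bigr (fun j : 'I_N => if j == a + l :> nat then m%:R * w ^+ a else 0)).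
    rewrite -big_mkcond (big_ord1_eq _ (fun=> m%:R * w ^+ a)).
    have -> : (a + l < N)%N = (l < N - a)%N by apply/idP/idP; lia.
    by case: ifP; rewrite ?mul1r ?mul0r.
  move=> j _; rewrite eq_sym; case: eqP => [->|_]; last by rewrite mulr0.
  by rewrite exprD -(mulrA (w ^+ a)) -exprMn -normCK w_norm1 !expr1n mulr1 mulrC.
rewrite exchange_big /=; under eq_bigr do rewrite pick.
by rewrite -mulr_suml -natr_sum sum_ord_ltn (minn_idPr (leq_subr _ _)) mulrCA.
Qed.

Lemma sum_horner_fejer (p : {poly C}) n N w : (size p <= n.+1)%N -> (n + N <= m)%N ->
  `|w| = 1 -> \sum_(k < m) p.[om ^+ k] * fejer N (w * (om ^+ k)^*) =
              m%:R * \sum_(i < n.+1) (N - i)%:R * (p`_i * w ^+ i).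
Proof.
move=> le_pn le_nNm w_norm1; under eq_bigr do rewrite (horner_coef_wide _ le_pn) mulr_suml.
rewrite exchange_big mulr_sumr; apply: eq_bigr => i _.
have le_iNm : (i + N <= m)%N by have := ltn_ord i; lia.
under eq_bigr do rewrite -mulrA.
by rewrite -mulr_sumr sum_monomial_fejer //; ring.
Qed.

Lemma sum_fejer N w : (N <= m)%N -> `|w| = 1 ->
  \sum_(k < m) fejer N (w * (om ^+ k)^*) = m%:R * N%:R.
Proof.
move=> le_Nm w_norm1; have := sum_monomial_fejer (a := 0) le_Nm w_norm1.
by under eq_bigr do rewrite expr0 mul1r; rewrite subn0 expr0 mulr1.
Qed.

Lemma vallee_poussin_norm_le (p : {poly C}) n A B w (M : C) :
  (size p <= n.+1)%N -> (n <= B <= A)%N -> (n + A <= m)%N -> `|w| = 1 ->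
  (forall k : 'I_m, `|p.[om ^+ k]| <= M) -> (A - B)%:R * `|p.[w]| <= (A + B)%:R * M.
Proof.
move=> le_pn /andP[le_nB le_BA] le_nAm w_norm1 p_le_M.
have le_nBm : (n + B <= m)%N by lia.
have m_gt0 : (0 < m)%N := prim_order_gt0 prim_om.
have reproduce : m%:R * ((A - B)%:R * p.[w]) = \sum_(k < m)
    p.[om ^+ k] * (fejer A (w * (om ^+ k)^*) - fejer B (w * (om ^+ k)^*)).
  under eq_bigr do rewrite mulrBr.
  rewrite sumrB (sum_horner_fejer le_pn le_nAm w_norm1) (sum_horner_fejer le_pn le_nBm w_norm1).
  rewrite -mulrBr -sumrB (horner_coef_wide _ le_pn) mulr_sumr; congr (_ * _).
  apply: eq_bigr => i _; have le_iB : (i <= B)%N by have := ltn_ord i; lia.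
  have -> : (A - B)%:R = (A - i)%:R - (B - i)%:R :> C by rewrite -natrB; [congr _%:R|]; lia.
  by ring.
have mr_gt0 : 0 < m%:R :> C by rewrite ltr0n.
rewrite -(ler_pM2l mr_gt0).
have -> : m%:R * ((A - B)%:R * `|p.[w]|) = `|m%:R * ((A - B)%:R * p.[w])|.
  by rewrite !normrM !normr_nat.
rewrite reproduce; apply: le_trans (ler_norm_sum _ _ _) _.
have -> : m%:R * ((A + B)%:R * M) =
    \sum_(k < m) M * (fejer A (w * (om ^+ k)^*) + fejer B (w * (om ^+ k)^*)).
  have [le_Am le_Bm] : (A <= m)%N /\ (B <= m)%N by lia.
  by rewrite -mulr_sumr big_split /= !sum_fejer // natrD; ring.
apply: ler_sum => k _; rewrite normrM; apply: ler_pM; rewrite ?normr_ge0 //.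
by apply: le_trans (ler_normB _ _) _; rewrite !ger0_norm ?fejer_ge0.
Qed.

Lemma norm_horner_le_twice_samples (p : {poly C}) n w (M : C) :
  (size p <= n.+1)%N -> (4 * n + 3 <= m)%N -> `|w| = 1 ->
  (forall k : 'I_m, `|p.[om ^+ k]| <= M) -> `|p.[w]| <= 2 * M.
Proof.
move=> le_pn le_4n3_m w_norm1 p_le_M.
have := @vallee_poussin_norm_le p n (3 * n.+1) n.+1 w M le_pn.
have -> : ((3 * n.+1 - n.+1)%N%:R : C) = 2 * n.+1%:R by rewrite -natrM; congr _%:R; lia.
have -> : ((3 * n.+1 + n.+1)%N%:R : C) = 2 * n.+1%:R * 2 by rewrite -!natrM; congr _%:R; lia.
rewrite -(mulrA _ 2) ler_pM2l ?mulr_gt0 ?ltr0n //; apply => //; lia.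
Qed.

End FejerSampling.

Lemma mul_horner_deriv (R : idomainType) (p : {poly R}) N x : (size p <= N.+1)%N ->
  x * p^`().[x] = \sum_(j < N.+1) j%:R * (p`_j * x ^+ j).
Proof.
move=> le_pN; have le_dN : (size p^`() <= N)%N.
  have [-> | p_neq0] := eqVneq p 0; first by rewrite deriv0 size_poly0.
  by rewrite -ltnS (leq_trans (lt_size_deriv p_neq0)).
rewrite (horner_coef_wide _ le_dN) mulr_sumr big_ord_recl /= mul0r add0r.
by apply: eq_bigr => i _; rewrite coef_deriv /bump /= add1n -mulr_natl exprS; ring.
Qed.

Section RieszInterpolation.
Variables (C : numClosedFieldType) (n : nat) (eta : C).
Hypothesis prim_eta : (n.*2).-primitive_root eta.

Let n_gt0 : (0 < n)%N.
Proof. by have := prim_order_gt0 prim_eta; rewrite double_gt0. Qed.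

Lemma prim_root_expr_half : eta ^+ n = -1.
Proof.
have /eqP := prim_expr_order prim_eta; rewrite -addnn exprD -expr2 sqrf_eq1.
case/orP => /eqP // eta_n1; have := prim_order_dvd prim_eta n.
by rewrite eta_n1 eqxx (gtnNdvd n_gt0) // -addnn; lia.
Qed.

Lemma prim_root_sqr : n.-primitive_root (eta ^+ 2).
Proof.
have n_dvd_2n : (n %| n.*2)%N by rewrite -muln2 dvdn_mulr.
by have := dvdn_prim_root prim_eta n_dvd_2n; rewrite -muln2 mulKn.
Qed.

(* The nodes are the n-th roots of -1; at a node u = e^(it) the weight is
   4u / (u - 1)^2 = -1 / sin^2(t/2), the coefficient of M. Riesz's interpolation
   formula [riesz_identity]. *)
Definition riesz_node k := eta ^+ k.*2.+1.

Definition riesz_weight k := riesz_node k * (\sum_(i < n) riesz_node k ^+ i) ^+ 2.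

Lemma norm_riesz_node k : `|riesz_node k| = 1.
Proof. by rewrite normrX (norm_prim_root prim_eta) expr1n. Qed.

Lemma riesz_node_expr_half k : riesz_node k ^+ n = -1.
Proof.
by rewrite /riesz_node exprAC prim_root_expr_half -signr_odd /= odd_double expr1.
Qed.

Lemma sum_riesz_node_exp e :
  \sum_(k < n) riesz_node k ^+ e = eta ^+ e * (if (n %| e)%N then n%:R else 0).
Proof.
rewrite -(sum_prim_root_exp e prim_root_sqr) mulr_sumr; apply: eq_bigr => k _.
by rewrite /riesz_node -!exprM -exprD; congr (_ ^+ _); rewrite -addnn; nia.
Qed.

Lemma sum_riesz_node_exp_small e : (0 < e < n * 3)%N ->
  \sum_(k < n) riesz_node k ^+ e = n%:R * ((e == n.*2)%:R - (e == n)%:R).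
Proof.
move=> e_range; rewrite sum_riesz_node_exp dvdn_ltn_triple //.
have [-> | ne_en] := eqVneq e n.
  have -> : (n == n.*2) = false by apply/eqP; lia.
  by rewrite prim_root_expr_half /=; ring.
have [-> | _] := eqVneq e n.*2; last by rewrite /= mulr0 subrr mulr0.
by rewrite (prim_expr_order prim_eta) /=; ring.
Qed.

Lemma sum_riesz_weight j : (j <= n)%N ->
  \sum_(k < n) riesz_node k ^+ j * riesz_weight k = n%:R * (2 * j%:R - n%:R).
Proof.
move=> le_jn.
have expand k : riesz_node k ^+ j * riesz_weight k =
    \sum_(i < n) \sum_(l < n) riesz_node k ^+ (j.+1 + i + l).
  rewrite /riesz_weight expr2 mulr_suml !mulr_sumr; apply: eq_bigr => i _.
  by rewrite !mulr_sumr; apply: eq_bigr => l _; rewrite !exprD exprS; ring.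
under eq_bigr do rewrite expand.
rewrite exchange_big; under eq_bigr => i _ do rewrite exchange_big.
have small (i l : 'I_n) : \sum_(k < n) riesz_node k ^+ (j.+1 + i + l) =
    n%:R * ((j.+1 + i + l == n.*2)%:R - (j.+1 + i + l == n)%:R).
  by apply: sum_riesz_node_exp_small; have := ltn_ord i; have := ltn_ord l; lia.
under eq_bigr => i _ do under eq_bigr => l _ do rewrite small.
under eq_bigr => i _ do rewrite -mulr_sumr sumrB -!natr_sum.
rewrite -mulr_sumr sumrB -!natr_sum sum_ord_pairs_eq_double // sum_ord_pairs_eq //.
by rewrite natrB //; ring.
Qed.

Lemma riesz_weight_le0 k : riesz_weight k <= 0.
Proof.
set u := riesz_node k; set s := \sum_(i < n) u ^+ i.
have us : (u - 1) * s = - 2%:R by rewrite -subrX1 riesz_node_expr_half; ring.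
have uuc : u * u^* = 1 by rewrite -normCK norm_riesz_node expr1n.
have u1_neq0 : u - 1 != 0.
  by apply: contra_eq_neq us => ->; rewrite mul0r eq_sym oppr_eq0 pnatr_eq0.
have usc : (1 - u) * s^* = u * - 2%:R.
  have := congr1 (fun x => u * x^*) us; rewrite /= !rmorphM rmorphB rmorph1 rmorphN.
  by rewrite rmorph_nat mulrA mulrBr uuc mulr1.
(* Conjugating (u - 1) s = -2 with u^* = u^-1 gives s^* = - u s, so the weight
   u s^2 is - |s|^2. *)
have conj_s : s^* = - (u * s).
  have : (u - 1) * (s^* + u * s) = 0.
    by rewrite mulrDr mulrCA us -[u - 1]opprB mulNr usc; ring.
  by move/eqP; rewrite mulf_eq0 (negbTE u1_neq0) addr_eq0 => /eqP.
have -> : riesz_weight k = - (s * s^*) by rewrite conj_s /riesz_weight -/u -/s; ring.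
by rewrite -normCK oppr_le0 exprn_ge0.
Qed.

Lemma riesz_identity (p : {poly C}) w : (size p <= n.+1)%N ->
  \sum_(k < n) riesz_weight k * p.[w * riesz_node k] =
    n%:R * (2 * (w * p^`().[w]) - n%:R * p.[w]).
Proof.
move=> le_pn; under eq_bigr do rewrite (horner_coef_wide _ le_pn) mulr_sumr.
rewrite exchange_big /= (mul_horner_deriv _ le_pn) (horner_coef_wide _ le_pn).
rewrite !mulr_sumr -sumrB mulr_sumr; apply: eq_bigr => j _.
rewrite (eq_bigr (fun k : 'I_n => p`_j * w ^+ j * (riesz_node k ^+ j * riesz_weight k))).
  by rewrite -mulr_sumr (sum_riesz_weight (ltn_ord j)); ring.
by move=> k _; rewrite exprMn; ring.
Qed.

Lemma bernstein_norm_le (p : {poly C}) w (S : C) : (size p <= n.+1)%N -> `|w| = 1 ->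
  (forall v, `|v| = 1 -> `|p.[v]| <= S) -> `|p^`().[w]| <= n%:R * S.
Proof.
move=> le_pn w_norm1 p_le_S.
have sum_weight : \sum_(k < n) riesz_weight k = - (n%:R * n%:R).
  have := sum_riesz_weight (leq0n n); under eq_bigr do rewrite expr0 mul1r.
  by move=> ->; ring.
have decomp : 2 * n%:R * (w * p^`().[w]) =
    \sum_(k < n) riesz_weight k * p.[w * riesz_node k] + n%:R * n%:R * p.[w].
  by rewrite riesz_identity //; ring.
have two_n_gt0 : 0 < 2 * n%:R :> C by rewrite mulr_gt0 ?ltr0n.
rewrite -(ler_pM2l two_n_gt0).
have -> : 2 * n%:R * `|p^`().[w]| = `|2 * n%:R * (w * p^`().[w])|.
  by rewrite !normrM w_norm1 mul1r !normr_nat.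
have -> : 2 * n%:R * (n%:R * S) = - (\sum_(k < n) riesz_weight k) * S + n%:R * n%:R * S.
  by rewrite sum_weight; ring.
rewrite decomp; apply: le_trans (ler_normD _ _) _; apply: lerD.
  rewrite -sumrN mulr_suml; apply: le_trans (ler_norm_sum _ _ _) _; apply: ler_sum => k _.
  rewrite normrM ler0_norm ?riesz_weight_le0 //.
  apply: ler_wpM2l; first by rewrite oppr_ge0 riesz_weight_le0.
  by apply: p_le_S; rewrite normrM w_norm1 norm_riesz_node mulr1.
rewrite !normrM !normr_nat ler_wpM2l ?mulr_ge0 ?ler0n //.
by apply: p_le_S.
Qed.

End RieszInterpolation.

Lemma le_bigmax_ge0 (C : numDomainType) (I : finType) (F : I -> C) j :
  (forall i, 0 <= F i) -> F j <= \big[Num.max/0]_i F i.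
Proof.
move=> F_ge0; have : j \in index_enum I by rewrite mem_index_enum.
elim: (index_enum I) => // a r IH; rewrite inE big_cons.
have max_real : \big[Num.max/0]_(i <- r) F i \is Num.real.
  by apply: bigmax_real => // i _; apply: ger0_real.
rewrite (comparable_le_max _ (real_comparable (ger0_real (F_ge0 a)) max_real)).
by case/orP => [/eqP ->|/IH ->]; rewrite ?lexx ?orbT.
Qed.

Section UnitRootPoint.
Variable R : realType.
Local Open Scope complex_scope.

Lemma unit_root_ptD N a b :
  unit_root_pt R N a * unit_root_pt R N b = unit_root_pt R N (a + b).
Proof.
rewrite /unit_root_pt natrD.
set x := (2 * a%:R * pi) / N%:R; set y := (2 * b%:R * pi) / N%:R.
have -> : (2 * (a%:R + b%:R) * pi) / N%:R = x + y by rewrite /x /y; ring.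
by rewrite cosD sinD; congr (_ +i* _); ring.
Qed.

Lemma unit_root_ptE N k : unit_root_pt R N k = unit_root_pt R N 1 ^+ k.
Proof.
elim: k => [|k IH]; last by rewrite exprS -IH unit_root_ptD.
by rewrite /unit_root_pt mulr0 !mul0r cos0 sin0.
Qed.

Lemma unit_root_pt_neq1 N s : (0 < s < N)%N -> unit_root_pt R N s != 1.
Proof.
case/andP => s_gt0 lt_sN; pose y : R := (s%:R * pi) / N%:R.
have N_gt0 : 0 < N%:R :> R by rewrite ltr0n (ltn_trans s_gt0).
have y_gt0 : 0 < y by rewrite divr_gt0 // mulr_gt0 ?pi_gt0 ?ltr0n.
have y_ltpi : y < pi by rewrite ltr_pdivrMr // mulrC ltr_pM2l ?pi_gt0 ?ltr_nat.
have sin_gt0 := sin_gt0_pi (introT andP (conj y_gt0 y_ltpi)).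
rewrite /unit_root_pt.
have -> : (2 * s%:R * pi) / N%:R = y *+ 2 by rewrite /y mulr2n; field; rewrite gt_eqF.
apply/negP => /eqP [+ _]; rewrite cos_mulr2n cos2sin2 mulr2n => ?; nra.
Qed.

Lemma prim_unit_root_pt N : (0 < N)%N -> N.-primitive_root (unit_root_pt R N 1).
Proof.
move=> N_gt0; apply/andP; split => //; apply/forallP => i.
rewrite unity_rootE -unit_root_ptE; case: (eqVneq i.+1 N) => [iN|ne_iN].
  rewrite iN /unit_root_pt mulrAC mulfK ?pnatr_eq0 -?lt0n //.
  by rewrite mulr_natl cos2pi sin2pi eqxx.
by rewrite (negbTE (unit_root_pt_neq1 _)) //= ltn_neqAle ne_iN ltn_ord.
Qed.

Lemma norm_horner_unit_root_le_bigmax (p : {poly R[i]}) m k : (0 < m)%N ->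
  `|p.[unit_root_pt R m 1 ^+ k]| <= \big[Num.max/0]_(j < m) `|p.[unit_root_pt R m j.+1]|.
Proof.
move=> m_gt0; have prim_om := prim_unit_root_pt m_gt0.
have le_bigmax (j : 'I_m) :=
  le_bigmax_ge0 j (fun j : 'I_m => normr_ge0 p.[unit_root_pt R m j.+1]).
rewrite -(prim_expr_mod prim_om) -unit_root_ptE; case def_r : (k %% m)%N => [|r].
  have lt_pred : (m.-1 < m)%N by rewrite ltn_predL.
  have := le_bigmax (Ordinal lt_pred); rewrite /= prednK // unit_root_ptE.
  by rewrite (prim_expr_order prim_om) (unit_root_ptE m 0) expr0.
have lt_rm : (r < m)%N by have := ltn_pmod k m_gt0; rewrite def_r => /ltnW.
exact: (le_bigmax (Ordinal lt_rm)).
Qed.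

End UnitRootPoint.

Lemma norm_horner_le_on_disk (R : realType) (g : {poly R[i]}) (B : R[i]) z :
  (forall w, `|w| = 1 -> `|g.[w]| <= B) -> `|z| <= 1 -> `|g.[z]| <= B.
Proof.
move=> g_le_B z_le1.
have B_ge0 : 0 <= B := le_trans (normr_ge0 _) (g_le_B 1 (normr1 _)).
have pow_le K : `|g.[z]| ^+ K <= ((K * size g).+1)%:R * B ^+ K.
  have prim_w := prim_unit_root_pt R (ltn0Sn (K * size g)).
  rewrite -normrX -horner_exp; apply: (norm_horner_le_samples prim_w _ z_le1).
    by apply: leq_trans (size_poly_exp_leq _ _) _; rewrite ltnS mulnC leq_mul2l leq_pred orbT.
  move=> k; rewrite horner_exp normrX lerXn2r ?nnegrE ?normr_ge0 //.
  by apply: g_le_B; rewrite normrX (norm_prim_root prim_w) expr1n.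
case/complex_realP: (ger0_real B_ge0) => b Bb.
case/complex_realP: (ger0_real (normr_ge0 g.[z])) => a ga.
move: B_ge0 pow_le (normr_ge0 g.[z]); rewrite Bb ga !lecR => b_ge0 pow_le a_ge0.
apply: (ler_of_expr_le_linear (d := size g)) => // K; have := pow_le K.
by rewrite -!(rmorphXn (real_complex R)) -(rmorph_nat (real_complex R)) -rmorphM lecR.
Qed.

Theorem corollaryF3 (R : realType) (n : nat) (p : {poly R[i]}) :
  (1 <= n)%N -> size p = n.+1 ->
  let m := (20 * n)%N in
  forall z : R[i], `|z| <= 1 ->
    `|(p^`()).[z]| <=
      (2 * n)%:R * \big[Num.max/0]_(k < m) `|p.[unit_root_pt R m k.+1]|.
Proof.
move=> n_gt0 size_p m z z_le1; set M := \big[Num.max/0]_(k < m) _.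
have le_pn : (size p <= n.+1)%N by rewrite size_p.
have m_gt0 : (0 < m)%N by rewrite /m; lia.
have p_le_M (k : 'I_m) : `|p.[unit_root_pt R m 1 ^+ k]| <= M.
  exact: norm_horner_unit_root_le_bigmax.
have le_4n3_m : (4 * n + 3 <= m)%N by rewrite /m; lia.
have p_le_2M w : `|w| = 1 -> `|p.[w]| <= 2 * M.
  move=> w_norm1; have prim_om := @prim_unit_root_pt R _ m_gt0.
  exact: (norm_horner_le_twice_samples prim_om le_pn le_4n3_m w_norm1 p_le_M).
have two_n_gt0 : (0 < n.*2)%N by rewrite double_gt0.
have p'_le w : `|w| = 1 -> `|p^`().[w]| <= n%:R * (2 * M).
  move=> w_norm1; have prim_eta := @prim_unit_root_pt R _ two_n_gt0.
  exact: (bernstein_norm_le prim_eta le_pn w_norm1 p_le_2M).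
by rewrite natrM -mulrA mulrCA; apply: norm_horner_le_on_disk p'_le z_le1.
Qed.
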